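(* Let $\phi:F\langle z,y\rangle\to F\langle \alpha,\delta\rangle$ be the homomorphism of free groups with $\phi(z)=\alpha^4\delta^2$ and $\phi(y)=\delta^{-1}\alpha\delta$. Let $w=\dots y^{n_{k-1}}z^{n_k}$ or $w=\dots z^{n_{k-1}}y^{n_k}$ be a reduced word of length $k\ge1$ in alternating nonzero powers of $z$ and $y$ (all $n_i\neq0$). Then: (a) if $w$ ends in a nonzero power of $z$, the reduced form of $\phi(w)$ ends in either $\delta^{-1}\alpha^{-4}$ or $\alpha^4\delta^2$; (b) if $w$ ends in a nonzero power of $y$, the reduced form of $\phi(w)$ ends in $\alpha^n\delta$ for some $n\neq0$. *)

From mathcomp Require Import all_boot all_algebra.
Set Implicit Arguments. Unset Strict Implicit. Unset Printing Implicit Defensive.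

(* A letter of a free group on two generators: (generator, sign).
   generator false = first generator, true = second generator;
   sign true = the generator itself, false = its inverse.
   Source group F<z,y>:  z = first generator, y = second.
   Target group F<alpha,delta>: alpha = first generator, delta = second. *)
Definition letter := (bool * bool)%type.

Definition inv_letter (x : letter) : letter := (x.1, ~~ x.2).
Definition inv_word (s : seq letter) : seq letter := rev (map inv_letter s).

Definition is_reduced (s : seq letter) : bool :=
  sorted (fun x y => y != inv_letter x) s.

Definition reduce (s : seq letter) : seq letter :=
  foldr (fun x acc => match acc with
                      | y :: t => if y == inv_letter x then t else x :: acc
                      | [::] => [:: x] end) [::] s.

Definition alpha : letter := (false, true).
Definition delta : letter := (true, true).
Definition z_gen : bool := false.
Definition y_gen : bool := true.

Definition apow (n : int) : seq letter :=
  match n with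
  | Posz m => nseq m alpha
  | Negz m => nseq m.+1 (inv_letter alpha)
  end.

Definition phi_gen (g : bool) : seq letter :=
  if g then [:: inv_letter delta; alpha; delta]
  else nseq 4 alpha ++ nseq 2 delta.

Definition phi_letter (x : letter) : seq letter :=
  if x.2 then phi_gen x.1 else inv_word (phi_gen x.1).

Definition phi (w : seq letter) : seq letter :=
  reduce (flatten (map phi_letter w)).

From mathcomp Require Import all_boot all_algebra.
Set Implicit Arguments. Unset Strict Implicit. Unset Printing Implicit Defensive.

(* Follow the reduced form of phi(w) while w grows by one letter on the right.
   If w ends in z, z^-1, y or y^-1, then phi(w) ends in alpha^4 delta^2,
   delta^-1 alpha^-4, alpha^m delta or alpha^-m delta (m > 0) respectively.
   Appending phi of any letter other than the inverse of the last one cancels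
   at most a single delta against the image of the new letter, and the new
   ending is again one of these four patterns. *)

Definition push (x : letter) (s : seq letter) : seq letter :=
  match s with
  | y :: t => if y == inv_letter x then t else x :: s
  | [::] => [:: x]
  end.

Lemma inv_letterK : involutive inv_letter.
Proof. by case=> a b; rewrite /inv_letter /= negbK. Qed.

Lemma is_reduced_push x s : is_reduced s -> is_reduced (push x s).
Proof.
case: s => [|y t] //= red_yt; case: ifP => [_ | y_x]; last by rewrite /is_reduced /= y_x.
by move: red_yt; case: t => //= u t /andP[].
Qed.

Lemma is_reduced_foldr_push r s : is_reduced r -> is_reduced (foldr push r s).
Proof. by move=> red_r; elim: s => //= x s; apply: is_reduced_push. Qed.

Lemma is_reduced_reduce s : is_reduced (reduce s).
Proof. exact: is_reduced_foldr_push. Qed.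

Lemma push_invK x s : is_reduced s -> push x (push (inv_letter x) s) = s.
Proof.
case: s => [|y t] /=; first by rewrite eqxx.
case: ifP => [/eqP -> | _]; last by rewrite /push eqxx.
rewrite inv_letterK; case: t => [|u t] //= /andP[u_y _].
by rewrite (negbTE u_y).
Qed.

Lemma reduce_cat s t : reduce (s ++ t) = foldr push (reduce t) s.
Proof. exact: foldr_cat. Qed.

Lemma reduce_id s : is_reduced s -> reduce s = s.
Proof.
elim: s => //= x s IHs red_xs.
have red_s : is_reduced s by move: red_xs; case: s {IHs} => //= y s /andP[].
rewrite -/(reduce s) IHs //; case: s red_xs {IHs red_s} => //= y s /andP[y_x _].
by rewrite (negbTE y_x).
Qed.

Lemma reduceK s : reduce (reduce s) = reduce s.
Proof. exact/reduce_id/is_reduced_reduce. Qed.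

Lemma foldr_push_reduce r s :
  is_reduced r -> foldr push r (reduce s) = foldr push r s.
Proof.
move=> red_r; elim: s => //= x s <-.
case: (reduce s) (is_reduced_reduce s) => [|y t] //= red_yt.
case: ifP => //= /eqP ->.
by rewrite push_invK //; apply: is_reduced_foldr_push; case: t red_yt => //= ? ? /andP[].
Qed.

Lemma reduce_catl s t : reduce (reduce s ++ t) = reduce (s ++ t).
Proof. by rewrite !reduce_cat foldr_push_reduce // is_reduced_reduce. Qed.

Lemma reduce_catr s t : reduce (s ++ reduce t) = reduce (s ++ t).
Proof. by rewrite !reduce_cat reduceK. Qed.

Lemma reduce_cat_cons p a s t :
  is_reduced (p ++ a :: s) -> is_reduced (a :: t) -> reduce (p ++ a :: t) = p ++ a :: t.
Proof.
move=> red_pas red_at; apply: reduce_id; case: p red_pas => //= x p.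
by rewrite /is_reduced /= !cat_path /= => /andP[-> /andP[-> _]].
Qed.

Lemma nseqS_cat T n (x : T) s : nseq n.+1 x ++ s = nseq n x ++ x :: s.
Proof. by elim: n => //= n ->. Qed.

Lemma phi_rcons w x : phi (rcons w x) = reduce (phi w ++ phi_letter x).
Proof. by rewrite /phi reduce_catl -cats1 map_cat flatten_cat /= cats0. Qed.

Definition phi_tail (c : letter) (s : seq letter) : Prop :=
  match c with
  | (false, true) => exists p, s = p ++ nseq 4 alpha ++ nseq 2 delta
  | (false, false) => exists p, s = p ++ inv_letter delta :: nseq 4 (inv_letter alpha)
  | (true, b) => exists p m, s = p ++ nseq m.+1 (false, b) ++ [:: delta]
  end.

Lemma phi_tail_push c s x : phi_tail c s -> is_reduced s -> x != inv_letter c ->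
  phi_tail x (reduce (s ++ phi_letter x)).
Proof.
case: c => [[] b]; last case: b.
- case=> p [m ->]; rewrite nseqS_cat catA => red_s.
  rewrite -(catA (p ++ _)) -(reduce_catr (p ++ _)); case: x => [[] c] /= x_ne.
  + have {x_ne} -> : c = b by case: c b x_ne red_s => [] [].
    exists p, m.+1; case: b red_s => red_s; rewrite /= (reduce_cat_cons red_s) //;
      by rewrite -catA -!nseqS_cat.
  + case: c x_ne => _ /=; rewrite (reduce_cat_cons red_s) //.
    * by exists ((p ++ nseq m (false, b)) ++ [:: (false, b); delta]); rewrite -!catA.
    * by exists ((p ++ nseq m (false, b)) ++ [:: (false, b)]); rewrite -!catA.
- case=> p -> red_s; rewrite -catA -reduce_catr; case: x => [[] c] /= x_ne.
  + exists (p ++ nseq 4 alpha ++ [:: delta]), 0.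
    by case: c; rewrite /= (reduce_cat_cons red_s) // -!catA.
  + case: c x_ne => // _; rewrite /= (reduce_cat_cons red_s) //.
    by exists (p ++ nseq 4 alpha ++ nseq 2 delta); rewrite -!catA.
- case=> p -> red_s; rewrite -catA -reduce_catr; case: x => [[] c] /= x_ne.
  + exists (p ++ inv_letter delta :: nseq 4 (inv_letter alpha) ++ [:: inv_letter delta]), 0.
    by case: c; rewrite /= (reduce_cat_cons red_s) // -!catA.
  + case: c x_ne => // _; rewrite /= (reduce_cat_cons red_s) //.
    by exists (p ++ inv_letter delta :: nseq 4 (inv_letter alpha) ++ [:: inv_letter delta]);
      rewrite -!catA.
Qed.

Lemma phi_tail_last w : w != [::] -> is_reduced w -> phi_tail (last alpha w) (phi w).
Proof.
elim/last_ind: w => // w x IHw _; rewrite last_rcons.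
case: w IHw => [_ _ | y w IHw red_ywx].
  case: x => [[] []];
    [exists [:: inv_letter delta], 0 .. | exists [::] | exists [:: inv_letter delta]] => //.
have /andP[red_yw x_ne] : is_reduced (y :: w) && (x != inv_letter (last y w)).
  by move: red_ywx; rewrite /is_reduced /= rcons_path.
rewrite phi_rcons; apply: phi_tail_push; first exact: IHw.
- exact: is_reduced_reduce.
- exact: x_ne.
Qed.

Theorem mainTheorem9 (w : seq letter) :
  w != [::] -> is_reduced w ->
  ((last alpha w).1 = z_gen ->
     (exists p, phi w = p ++ [:: inv_letter delta] ++ nseq 4 (inv_letter alpha))
     \/ (exists p, phi w = p ++ nseq 4 alpha ++ nseq 2 delta))
  /\
  ((last alpha w).1 = y_gen ->
     exists n : int, n != 0 /\ exists p, phi w = p ++ apow n ++ [:: delta]).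
Proof.
move=> w_ne0 red_w; have := phi_tail_last w_ne0 red_w.
case: (last alpha w) => [[] []] /=.
- by case=> p [m phi_w]; split=> // _; exists (Posz m.+1); split=> //; exists p.
- by case=> p [m phi_w]; split=> // _; exists (Negz m); split=> //; exists p.
- by move=> tail_w; split=> // _; right.
- by move=> tail_w; split=> // _; left.
Qed.
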